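(* Let $F:\mathbb R^n\to\mathbb R^n$ be a monotone $\ell$-Lipschitz operator. Let $z^{(0)},z^{(-1)}\in\mathbb R^n$ and suppose there is $z^*$ with $F(z^* )=0$ and $\max\{\|z^*-z^{(0)}\|,\|z^*-z^{(-1)}\|\}\le D$. Let $\eta<\frac1{\ell\sqrt{10}}$ and let $z^{(t)}$ be the iterates $z^{(t+1)}=z^{(t)}-2\eta F(z^{(t)})+\eta F(z^{(t-1)})$, $t\ge0$. Then for every integer $T\ge1$, $$\min_{0\le t\le T-1}\|F(z^{(t)})\|\le\frac{4D}{\eta\sqrt T\sqrt{1-10\eta^2\ell^2}}.$$ More generally, for every integer $S\ge1$ with $S<T/3$, $$\min_{0\le t\le T-S}\ \max_{0\le s<S}\|F(z^{(t+s)})\|\le\frac{6D}{\eta\sqrt{T/S}\sqrt{1-10\eta^2\ell^2}}.$$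
   Context: $F$ is monotone if $\langle F(z')-F(z),z'-z\rangle\ge0$ for all $z,z'$. *)

From mathcomp Require Import all_boot all_order all_algebra.
From mathcomp Require Import reals.
Set Implicit Arguments. Unset Strict Implicit. Unset Printing Implicit Defensive.
Import Order.TTheory GRing.Theory Num.Theory.
Local Open Scope ring_scope.

Definition dotv (R : realType) (n : nat) (u v : 'rV[R]_n) : R :=
  \sum_(i < n) u ord0 i * v ord0 i.

Definition enorm (R : realType) (n : nat) (u : 'rV[R]_n) : R :=
  Num.sqrt (dotv u u).

Definition monotone_op (R : realType) (n : nat) (F : 'rV[R]_n -> 'rV[R]_n) :=
  forall z z' : 'rV[R]_n, 0 <= dotv (F z' - F z) (z' - z).

Definition lipschitz_op (R : realType) (n : nat) (l : R) (F : 'rV[R]_n -> 'rV[R]_n) :=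
  forall z z' : 'rV[R]_n, enorm (F z' - F z) <= l * enorm (z' - z).

From mathcomp Require Import all_boot all_order all_algebra.
From mathcomp Require Import reals ring lra zify.
Import Order.TTheory GRing.Theory Num.Theory.
Set Implicit Arguments. Unset Strict Implicit. Unset Printing Implicit Defensive.
Local Open Scope ring_scope.

(** Write y_k = z^{(k-1)} and G_k = F(y_k).  Monotonicity at the zero z^* turns
    the potential P_k = |y_{k+1} + eta G_k - z^*|^2 into an almost-decreasing
    sequence: P_{k+1} <= P_k + eta^2 |G_{k+1} - G_k|^2 - eta^2 |G_k|^2.  Since
    y_{k+2} - y_{k+1} = eta (G_k - 2 G_{k+1}), the Lipschitz bound gives
    |G_{k+2} - G_{k+1}|^2 <= eta^2 l^2 (8 |G_{k+1}|^2 + 2 |G_k|^2), so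
    Q_k = P_{k+1} + 2 eta^4 l^2 |G_k|^2 drops by at least
    c |G_{k+1}|^2 = eta^2 (1 - 10 eta^2 l^2) |G_{k+1}|^2 at each step, while
    Q_0 <= 3 D^2.  Hence c * sum_{t<T} |F z^{(t)}|^2 <= 3 D^2.  Cutting the
    first floor(T/S) S iterates into blocks of length S, the block of least
    squared residual sum gives the second bound (and, for S = 1, the first one);
    the argument yields the constants sqrt 3 and sqrt 6 in place of 4 and 6. *)

Section InnerProduct.
Variables (R : realType) (n : nat).
Implicit Types (u v w g h : 'rV[R]_n) (a : R).

Lemma dotvC u v : dotv u v = dotv v u.
Proof. by apply: eq_bigr => i _; rewrite mulrC. Qed.

Lemma dotvZl a u v : dotv (a *: u) v = a * dotv u v.
Proof. by rewrite /dotv mulr_sumr; apply: eq_bigr => i _; rewrite mxE mulrA. Qed.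

Lemma dotvZr a u v : dotv u (a *: v) = a * dotv u v.
Proof. by rewrite dotvC dotvZl dotvC. Qed.

Lemma dotvvZ a u : dotv (a *: u) (a *: u) = a ^+ 2 * dotv u u.
Proof. by rewrite dotvZl dotvZr mulrA -expr2. Qed.

Lemma dotvvN u : dotv (- u) (- u) = dotv u u.
Proof. by rewrite -scaleN1r dotvvZ sqrrN expr1n mul1r. Qed.

Lemma dotvv_ge0 u : 0 <= dotv u u.
Proof. by apply: sumr_ge0 => i _; rewrite -expr2 sqr_ge0. Qed.

Lemma enorm_sqr u : enorm u ^+ 2 = dotv u u.
Proof. by rewrite sqr_sqrtr // dotvv_ge0. Qed.

Lemma dotv_parallelogram u v :
  dotv (u + v) (u + v) + dotv (u - v) (u - v) = 2 * dotv u u + 2 * dotv v v.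
Proof.
rewrite /dotv !mulr_sumr -!big_split /=.
by apply: eq_bigr => i _; rewrite !mxE; ring.
Qed.

Lemma dotvvD_le u v : dotv (u + v) (u + v) <= 2 * dotv u u + 2 * dotv v v.
Proof. by rewrite -dotv_parallelogram lerDl dotvv_ge0. Qed.

Lemma dotv_descent a w g h :
  dotv (w - a *: g) (w - a *: g)
  = dotv w w + a ^+ 2 * dotv (g - h) (g - h) - a ^+ 2 * dotv h h
    - 2 * a * dotv g (w - a *: h).
Proof.
rewrite /dotv !mulr_sumr -big_split -!sumrB /=.
by apply: eq_bigr => i _; rewrite !mxE; ring.
Qed.

Lemma dotvv_le_sqr u (D : R) : enorm u <= D -> dotv u u <= D ^+ 2.
Proof.
move=> uD; rewrite -enorm_sqr ler_sqr // nnegrE ?(le_trans _ uD) //;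
  exact: sqrtr_ge0.
Qed.

Lemma lipschitz_op_dotv (l : R) (F : 'rV[R]_n -> 'rV[R]_n) :
  0 <= l -> lipschitz_op l F ->
  forall x y, dotv (F x - F y) (F x - F y) <= l ^+ 2 * dotv (x - y) (x - y).
Proof.
move=> l_ge0 F_lip x y; rewrite -!enorm_sqr -exprMn ler_sqr ?F_lip //.
  exact: sqrtr_ge0.
by rewrite nnegrE mulr_ge0 ?sqrtr_ge0.
Qed.

End InnerProduct.

Section NumericBounds.
Variable R : realType.
Implicit Types (a b : nat -> R).

Lemma exists_le_mean b k : (0 < k)%N ->
  exists2 i, (i < k)%N & k%:R * b i <= \sum_(0 <= j < k) b j.
Proof.
move=> k_gt0; case: (arg_minP (fun j : 'I_k => b j) (isT : predT (Ordinal k_gt0))).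
move=> i _ i_min; exists i => //.
rewrite big_mkord mulr_natl -[X in _ *+ X]card_ord -sumr_const.
by apply: ler_sum => j _; exact: i_min.
Qed.

Lemma sum_nat_blocks a S k :
  \sum_(0 <= m < k * S) a m = \sum_(0 <= i < k) \sum_(0 <= s < S) a (i * S + s)%N.
Proof.
elim: k => [|k IH]; first by rewrite mul0n !big_geq.
rewrite big_nat_recr //= -IH mulSnr (big_cat_nat (leq0n _) (leq_addr S _)) /=.
congr (_ + _); rewrite -{1}(add0n (k * S)%N) big_addn addKn.
by apply: eq_bigr => s _; rewrite addnC.
Qed.

Lemma exists_block_le_sum a S T : (forall m, 0 <= a m) -> (0 < S)%N -> (S <= T)%N ->
  exists2 t, (t <= T - S)%N &
    forall s, (s < S)%N -> (T %/ S)%:R * a (t + s)%N <= \sum_(0 <= m < T) a m.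
Proof.
move=> a_ge0 S_gt0 ST; set k := (T %/ S)%N.
have k_gt0 : (0 < k)%N by rewrite divn_gt0.
have [i ik i_mean] := exists_le_mean (fun i => \sum_(0 <= s < S) a (i * S + s)%N) k_gt0.
have kST : (k * S <= T)%N := leq_divM T S.
have iSk : (i * S + S <= k * S)%N by rewrite -mulSnr leq_mul2r ik orbT.
exists (i * S)%N => [|s sS]; first by lia.
apply: le_trans (ler_wpM2l (ler0n _ k) _) (le_trans i_mean _).
  rewrite (big_cat_nat (leq0n s) (ltnW sS)) (big_ltn sS) /=.
  by rewrite addrCA lerDl addr_ge0 ?sumr_ge0.
rewrite -sum_nat_blocks (big_cat_nat (leq0n _) kST) /= lerDl.
by rewrite sumr_ge0.
Qed.

Lemma mul_sqrt_lt1_sqr (r x : R) : 0 <= r -> 0 <= x -> r * Num.sqrt x < 1 ->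
  x * r ^+ 2 < 1.
Proof.
move=> r_ge0 x_ge0 lt1; have rx_ge0 : 0 <= r * Num.sqrt x by rewrite mulr_ge0 ?sqrtr_ge0.
have : (r * Num.sqrt x) ^+ 2 < 1 by rewrite expr2; nra.
by rewrite exprMn sqr_sqrtr // mulrC.
Qed.

Lemma sqrt_le_divr (x y b : R) : 0 < x -> 0 <= b -> x ^+ 2 * y <= b ^+ 2 ->
  Num.sqrt y <= b / x.
Proof.
move=> x_gt0 b_ge0 xyb; rewrite ler_pdivlMr // -(ger0_norm (ltW x_gt0)) -sqrtr_sqr.
by rewrite mulrC -sqrtrM ?sqr_ge0 // -(ger0_norm b_ge0) -sqrtr_sqr ler_wsqrtr.
Qed.

Lemma ratio_le_double_divn (S T : nat) : (0 < S)%N -> (S <= T)%N ->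
  T%:R / S%:R <= 2 * (T %/ S)%:R :> R.
Proof.
move=> S_gt0 ST; have k_gt0 : (0 < T %/ S)%N by rewrite divn_gt0.
have T_lt : (T < (T %/ S).+1 * S)%N := ltn_ceil T S_gt0.
rewrite ler_pdivrMr ?ltr0n // -mulrA -natrM -natrM ler_nat.
by rewrite mulSnr in T_lt; nia.
Qed.

Lemma sqrt_le_div_sqrtM (x b eta Y s : R) :
  0 < eta -> 0 < Y -> 0 < s -> 0 <= b -> Y * (eta ^+ 2 * s) * x <= b ^+ 2 ->
  Num.sqrt x <= b / (eta * Num.sqrt Y * Num.sqrt s).
Proof.
move=> eta_gt0 Y_gt0 s_gt0 b_ge0 xb; apply: sqrt_le_divr => //.
  by rewrite !mulr_gt0 ?sqrtr_gt0.
by rewrite !exprMn !sqr_sqrtr ?(ltW Y_gt0) ?(ltW s_gt0) //; lra.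
Qed.

End NumericBounds.

Section OptimisticGradient.
Variables (R : realType) (n : nat) (F : 'rV[R]_n -> 'rV[R]_n) (l eta : R).
Variables (zs : 'rV[R]_n) (y : nat -> 'rV[R]_n).
Hypotheses (F_mono : monotone_op F) (l_ge0 : 0 <= l) (F_lip : lipschitz_op l F).
Hypotheses (F_zs : F zs = 0) (eta_gt0 : 0 < eta) (eta_small : 10 * eta ^+ 2 * l ^+ 2 < 1).
Hypothesis y_step :
  forall k, y k.+2 = y k.+1 - (2 * eta) *: F (y k.+1) + eta *: F (y k).

Let sqF k := dotv (F (y k)) (F (y k)).
Let P k := dotv (y k.+1 + eta *: F (y k) - zs) (y k.+1 + eta *: F (y k) - zs).
Let Q k := P k.+1 + 2 * (eta ^+ 2 * l ^+ 2) * (eta ^+ 2 * sqF k).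
Let c := eta ^+ 2 * (1 - 10 * eta ^+ 2 * l ^+ 2).

Lemma ogda_potential_step k :
  P k.+1 <= P k + eta ^+ 2 * dotv (F (y k.+1) - F (y k)) (F (y k.+1) - F (y k))
            - eta ^+ 2 * sqF k.
Proof.
rewrite /P y_step.
have -> : y k.+1 - (2 * eta) *: F (y k.+1) + eta *: F (y k) + eta *: F (y k.+1) - zs
          = (y k.+1 + eta *: F (y k) - zs) - eta *: F (y k.+1).
  by apply/rowP => i; rewrite !mxE; ring.
rewrite (dotv_descent _ _ _ (F (y k))) (_ : _ - eta *: F (y k) = y k.+1 - zs); last first.
  by apply/rowP => i; rewrite !mxE; ring.
have := F_mono zs (y k.+1); rewrite F_zs subr0 => mono.
by rewrite lerBlDr lerDl mulr_ge0 // pmulr_rge0 ?ltW.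
Qed.

Lemma ogda_move_sqr_le k :
  dotv (y k.+2 - y k.+1) (y k.+2 - y k.+1) <= eta ^+ 2 * (8 * sqF k.+1 + 2 * sqF k).
Proof.
have -> : y k.+2 - y k.+1 = eta *: (2 *: - F (y k.+1) + F (y k)).
  by rewrite y_step; apply/rowP => i; rewrite !mxE; ring.
rewrite dotvvZ ler_wpM2l ?sqr_ge0 //; apply: le_trans (dotvvD_le _ _) _.
by rewrite dotvvZ dotvvN /sqF; lra.
Qed.

Lemma ogda_lyapunov_step k : Q k.+1 + c * sqF k.+1 <= Q k.
Proof.
have step := ogda_potential_step k.+1.
have lip := lipschitz_op_dotv l_ge0 F_lip (y k.+2) (y k.+1).
have move_le := ler_wpM2l (sqr_ge0 l) (ogda_move_sqr_le k).
have := ler_wpM2l (sqr_ge0 eta) (le_trans lip move_le).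
rewrite /Q /c; lra.
Qed.

Lemma ogda_lyapunov_telescope N : c * \sum_(0 <= m < N) sqF m.+1 <= Q 0.
Proof.
suff: c * \sum_(0 <= m < N) sqF m.+1 + Q N <= Q 0.
  apply: le_trans; rewrite lerDl /Q addr_ge0 ?dotvv_ge0 //.
  by rewrite !mulr_ge0 ?dotvv_ge0 ?(ltW eta_gt0).
elim: N => [|N IH]; first by rewrite big_mkord big_ord0 mulr0 add0r.
by rewrite big_nat_recr //= mulrDr; have := ogda_lyapunov_step N; lra.
Qed.

Lemma ogda_lyapunov0_le D :
  dotv (zs - y 1) (zs - y 1) <= D ^+ 2 -> dotv (zs - y 0) (zs - y 0) <= D ^+ 2 ->
  Q 0 <= 3 * D ^+ 2.
Proof.
move=> d1_le d0_le.
have sqF0_le : eta ^+ 2 * sqF 0 <= eta ^+ 2 * l ^+ 2 * D ^+ 2.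
  rewrite -mulrA ler_wpM2l ?sqr_ge0 //; apply: le_trans (ler_wpM2l (sqr_ge0 l) d0_le).
  have := lipschitz_op_dotv l_ge0 F_lip (y 0) zs.
  by rewrite F_zs subr0 -[y 0 - zs]opprB dotvvN.
have P0_le : P 0 <= 2 * dotv (zs - y 1) (zs - y 1) + 2 * (eta ^+ 2 * sqF 0).
  rewrite /P; have -> : y 1 + eta *: F (y 0) - zs = - (zs - y 1) + eta *: F (y 0).
    by apply/rowP => i; rewrite !mxE; ring.
  by apply: le_trans (dotvvD_le _ _) _; rewrite dotvvN dotvvZ.
have move_le : dotv (y 1 - y 0) (y 1 - y 0)
               <= 2 * dotv (zs - y 1) (zs - y 1) + 2 * dotv (zs - y 0) (zs - y 0).
  have -> : y 1 - y 0 = - (zs - y 1) + (zs - y 0).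
    by apply/rowP => i; rewrite !mxE; ring.
  by apply: le_trans (dotvvD_le _ _) _; rewrite dotvvN.
have lip := lipschitz_op_dotv l_ge0 F_lip (y 1) (y 0).
have P1_le := le_trans (ogda_potential_step 0)
  (lerB (lerD P0_le (ler_wpM2l (sqr_ge0 eta) (le_trans lip (ler_wpM2l (sqr_ge0 l) move_le))))
        (lexx _)).
set e := eta ^+ 2 * l ^+ 2.
have e_ge0 : 0 <= e by rewrite mulr_ge0 ?sqr_ge0.
have eD_ge0 : 0 <= e * D ^+ 2 by rewrite mulr_ge0 ?sqr_ge0.
have := ler_wpM2l e_ge0 d0_le; have := ler_wpM2l e_ge0 d1_le.
have := ler_wpM2l e_ge0 sqF0_le.
have : 0 <= (1 - 10 * e) * (e * D ^+ 2) by rewrite mulr_ge0 // subr_ge0 mulrA ltW.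
have : 0 <= (1 - 10 * e) * D ^+ 2 by rewrite mulr_ge0 ?sqr_ge0 // subr_ge0 mulrA ltW.
have := dotvv_ge0 (zs - y 0); have := dotvv_ge0 (zs - y 1); have := dotvv_ge0 (F (y 0)).
rewrite /Q /sqF /e in P1_le sqF0_le *; lra.
Qed.

Lemma ogda_sum_sqF_le D :
  dotv (zs - y 1) (zs - y 1) <= D ^+ 2 -> dotv (zs - y 0) (zs - y 0) <= D ^+ 2 ->
  forall N, c * \sum_(0 <= m < N) sqF m.+1 <= 3 * D ^+ 2.
Proof.
by move=> d1_le d0_le N; apply: le_trans (ogda_lyapunov0_le d1_le d0_le);
  exact: ogda_lyapunov_telescope.
Qed.

End OptimisticGradient.

Theorem lemma11 (R : realType) (n : nat) (F : 'rV[R]_n -> 'rV[R]_n) (l : R)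
  (zm1 zs : 'rV[R]_n) (z : nat -> 'rV[R]_n) (D eta : R) :
  monotone_op F -> 0 <= l -> lipschitz_op l F ->
  F zs = 0 ->
  Num.max (enorm (zs - z 0%N)) (enorm (zs - zm1)) <= D ->
  0 < eta -> eta * l * Num.sqrt 10 < 1 ->
  z 1%N = z 0%N - (2 * eta) *: F (z 0%N) + eta *: F zm1 ->
  (forall t : nat, z t.+2 = z t.+1 - (2 * eta) *: F (z t.+1) + eta *: F (z t)) ->
  (forall T : nat, (1 <= T)%N ->
     exists2 t : nat, (t <= T - 1)%N &
       enorm (F (z t)) <=
         4 * D / (eta * Num.sqrt T%:R * Num.sqrt (1 - 10 * eta ^+ 2 * l ^+ 2)))
  /\
  (forall T S : nat, (1 <= S)%N -> (S%:R : R) < T%:R / 3 ->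
     exists2 t : nat, (t <= T - S)%N &
       (forall s : nat, (s < S)%N ->
          enorm (F (z (t + s)%N)) <=
            6 * D / (eta * Num.sqrt (T%:R / S%:R)
                     * Num.sqrt (1 - 10 * eta ^+ 2 * l ^+ 2)))).
Proof.
move=> F_mono l_ge0 F_lip F_zs D_le eta_gt0 eta_l_lt1 z1 z_step.
pose y k := if k is k'.+1 then z k' else zm1.
have y_step k : y k.+2 = y k.+1 - (2 * eta) *: F (y k.+1) + eta *: F (y k) by case: k.
have eta_small : 10 * eta ^+ 2 * l ^+ 2 < 1.
  by rewrite -mulrA -exprMn; apply: mul_sqrt_lt1_sqr; rewrite ?ler0n ?mulr_ge0 ?(ltW eta_gt0).
have c_gt0 : 0 < eta ^+ 2 * (1 - 10 * eta ^+ 2 * l ^+ 2).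
  by rewrite mulr_gt0 ?exprn_gt0 ?subr_gt0.
have [zs_z0 zs_zm1] : enorm (zs - z 0%N) <= D /\ enorm (zs - zm1) <= D.
  by apply/andP; rewrite -ge_max.
have D_ge0 : 0 <= D by apply: le_trans zs_zm1; exact: sqrtr_ge0.
have sum_le N : eta ^+ 2 * (1 - 10 * eta ^+ 2 * l ^+ 2)
                * \sum_(0 <= m < N) dotv (F (z m)) (F (z m)) <= 3 * D ^+ 2.
  exact: (ogda_sum_sqF_le F_mono l_ge0 F_lip F_zs eta_gt0 eta_small y_step
            (dotvv_le_sqr zs_z0) (dotvv_le_sqr zs_zm1)).
have sqF_ge0 m : 0 <= dotv (F (z m)) (F (z m)) by exact: dotvv_ge0.
split=> [T T_gt0 | T S S_gt0 ST].
  have [t tT t_le] := exists_block_le_sum sqF_ge0 (ltn0Sn 0) T_gt0.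
  exists t => //; have := t_le 0%N isT; rewrite divn1 addn0 => Tt.
  apply: sqrt_le_div_sqrtM; rewrite ?ltr0n ?subr_gt0 ?mulr_ge0 //.
  have := ler_wpM2l (ltW c_gt0) Tt; have := sum_le T; have := sqr_ge0 D; lra.
have S_le_T : (S <= T)%N.
  by move: ST; rewrite ltr_pdivlMr // -natrM ltr_nat; lia.
have [t tT t_le] := exists_block_le_sum sqF_ge0 S_gt0 S_le_T.
exists t => // s sS; apply: sqrt_le_div_sqrtM; rewrite ?divr_gt0 ?ltr0n ?subr_gt0 ?mulr_ge0 //.
  exact: leq_trans S_le_T.
have := ler_wpM2l (ltW c_gt0) (t_le s sS).
have := ler_wpM2r (mulr_ge0 (ltW c_gt0) (sqF_ge0 (t + s)%N))
          (ratio_le_double_divn R S_gt0 S_le_T).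
have := sum_le T; have := sqr_ge0 D; lra.
Qed.
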